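(* Let $e_1<e_2<e_3<e_4$ be distinct reals and consider the reduced ellipsoidal integrable system $(\eta_1,\eta_2):M_h\to\mathbb R^2$ with $2h=1$, where $\eta_1=\sum_{i<j}\ell_{ij}^2\sum_{k\ne i,j}e_k$ and $\eta_2=\sum_{i<j}\ell_{ij}^2\prod_{k\ne i,j}e_k$. The set of critical values is composed of (parts of) four straight lines and a quadratic curve: the lines $\mathcal L_i:\ \eta_2-e_i(\eta_1-e_i)=0$, $i\in\{1,2,3,4\}$, and the part of the parabola $\eta_2=\eta_1^2/4$ given by $\mathcal C:(\eta_1,\eta_2)=(2t,t^2)$, $e_2\le t\le e_3$. There are six transverse intersections $\mathcal L_i\cap\mathcal L_j$ ($i\neq j$), occurring at $d_{ij}=(e_i+e_j,e_ie_j)$, and the points $d_i=(2e_i,e_i^2)$, $i\in\{2,3\}$, are the two tangential intersections of $\mathcal L_2$ and $\mathcal L_3$ with $\mathcal C$.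
   Context: $\mathbf L=(\ell_{12},\ell_{13},\ell_{14},\ell_{23},\ell_{24},\ell_{34})\in\mathbb R^6\cong\mathfrak{so}(4)^*$ with the Lie–Poisson bracket of $\mathfrak{so}(4)$ (extending $\ell_{ji}=-\ell_{ij}$: $\{\ell_{ij},\ell_{jk}\}=-\ell_{ik}$ for distinct $i,j,k$, and $\{\ell_{ij},\ell_{kl}\}=0$ when $\{i,j\}\cap\{k,l\}=\emptyset$). $M_h=\{\mathbf L:\sum_{i<j}\ell_{ij}^2=2h,\ \ell_{12}\ell_{34}-\ell_{13}\ell_{24}+\ell_{14}\ell_{23}=0\}\cong S^2\times S^2$ is a symplectic leaf; this system is the reduction of the geodesic flow on $S^3$ separated in ellipsoidal coordinates. *)

From Stdlib Require Import Reals.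
From Coquelicot Require Import Coquelicot.
Open Scope R_scope.

(* A point L = (l12,l13,l14,l23,l24,l34) of R^6 ~ so(4)^*. *)
Record L6 := mkL6 { l12 : R; l13 : R; l14 : R; l23 : R; l24 : R; l34 : R }.

Definition L6add (L V : L6) : L6 :=
  mkL6 (l12 L + l12 V) (l13 L + l13 V) (l14 L + l14 V)
       (l23 L + l23 V) (l24 L + l24 V) (l34 L + l34 V).

Definition L6scale (s : R) (V : L6) : L6 :=
  mkL6 (s * l12 V) (s * l13 V) (s * l14 V) (s * l23 V) (s * l24 V) (s * l34 V).

Definition dderiv (f : L6 -> R) (L V : L6) : R :=
  Derive (fun s => f (L6add L (L6scale s V))) 0.

Definition Cas1 (L : L6) : R :=
  l12 L ^ 2 + l13 L ^ 2 + l14 L ^ 2 + l23 L ^ 2 + l24 L ^ 2 + l34 L ^ 2.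
Definition Cas2 (L : L6) : R :=
  l12 L * l34 L - l13 L * l24 L + l14 L * l23 L.

Definition in_Mh (twoh : R) (L : L6) : Prop := Cas1 L = twoh /\ Cas2 L = 0.

Definition eta1 (e1 e2 e3 e4 : R) (L : L6) : R :=
  l12 L ^ 2 * (e3 + e4) + l13 L ^ 2 * (e2 + e4) + l14 L ^ 2 * (e2 + e3)
  + l23 L ^ 2 * (e1 + e4) + l24 L ^ 2 * (e1 + e3) + l34 L ^ 2 * (e1 + e2).

Definition eta2 (e1 e2 e3 e4 : R) (L : L6) : R :=
  l12 L ^ 2 * (e3 * e4) + l13 L ^ 2 * (e2 * e4) + l14 L ^ 2 * (e2 * e3)
  + l23 L ^ 2 * (e1 * e4) + l24 L ^ 2 * (e1 * e3) + l34 L ^ 2 * (e1 * e2).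

Definition tangent_Mh (L V : L6) : Prop :=
  dderiv Cas1 L V = 0 /\ dderiv Cas2 L V = 0.

(* L is a critical point of F = (eta1, eta2) restricted to M_h:
   the differential dF_L restricted to T_L M_h has rank < 2, i.e.
   some nonzero covector (a,b) annihilates dF_L(T_L M_h). *)
Definition critical_point (e1 e2 e3 e4 twoh : R) (L : L6) : Prop :=
  in_Mh twoh L /\
  exists a b : R, (a <> 0 \/ b <> 0) /\
    forall V : L6, tangent_Mh L V ->
      a * dderiv (eta1 e1 e2 e3 e4) L V + b * dderiv (eta2 e1 e2 e3 e4) L V = 0.

Definition critical_value (e1 e2 e3 e4 twoh : R) (p : R * R) : Prop :=
  exists L : L6, critical_point e1 e2 e3 e4 twoh L /\
    p = (eta1 e1 e2 e3 e4 L, eta2 e1 e2 e3 e4 L).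

Definition on_line (ei : R) (p : R * R) : Prop := snd p - ei * (fst p - ei) = 0.

Definition on_C (e2 e3 : R) (p : R * R) : Prop :=
  exists t, e2 <= t <= e3 /\ p = (2 * t, t ^ 2).

Definition on_parabola (p : R * R) : Prop := snd p = fst p ^ 2 / 4.

From Stdlib Require Import Reals Lra Lia.
From Coquelicot Require Import Coquelicot.
Open Scope R_scope.

(* At a critical point L of (eta1, eta2) on M_1 some a d eta1 + b d eta2 lies in the span
   of dCas1 and dCas2.  Coordinatewise this reads g_ij l_ij = nu ( *L)_ij, where * is the
   Hodge star pairing 12-34, 13-24, 14-23 and g_ij = a (e_k + e_l) + b e_k e_l - mu for
   {k, l} complementary to {i, j}; g_ij vanishes iff d_kl lies on the line aX + bY = mu.
   On a Hodge pair with a nonzero coordinate g_ij g_kl = nu^2, and the three such products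
   differ by multiples of a^2 + b mu.  So either a single Hodge pair is nonzero, Cas2 = 0
   leaves one nonzero coordinate and the value is some d_kl, on a line L_k; or
   a^2 + b mu = 0, i.e. the line aX + bY = mu touches the parabola at some (2t, t^2), and
   g_ij = b (e_k - t)(e_l - t).  The value then lies on the tangent line
   eta2 = t (eta1 - t), which is L_k when t = e_k; otherwise
   (e_1 - t)...(e_4 - t) = (nu/b)^2 > 0 and eta1 = 2t, and the ordering of the e_i
   forces e_2 < t < e_3.  Conversely, explicit points of M_1 realise the segments of the
   lines, the arc C and the points d_ij. *)

Definition dot (L V : L6) : R :=
  l12 L * l12 V + l13 L * l13 V + l14 L * l14 V
  + l23 L * l23 V + l24 L * l24 V + l34 L * l34 V.

Definition hodge (L : L6) : L6 :=
  mkL6 (l34 L) (- l24 L) (l23 L) (l14 L) (- l13 L) (l12 L).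

Definition pmul (c L : L6) : L6 :=
  mkL6 (l12 c * l12 L) (l13 c * l13 L) (l14 c * l14 L)
       (l23 c * l23 L) (l24 c * l24 L) (l34 c * l34 L).

Definition compl_vec (f : R -> R -> R) (e1 e2 e3 e4 : R) : L6 :=
  mkL6 (f e3 e4) (f e2 e4) (f e2 e3) (f e1 e4) (f e1 e3) (f e1 e2).

Definition lcoef (a b mu u v : R) : R := a * (u + v) + b * (u * v) - mu.

Definition tangent_proj (L V : L6) : L6 :=
  L6add V (L6add (L6scale (- dot L V) L) (L6scale (- dot (hodge L) V) (hodge L))).

Ltac L6_ring :=
  unfold tangent_proj, L6add, L6scale, dot, hodge, pmul, compl_vec, lcoef; simpl; ring.

Lemma dderiv_Cas1 L V : dderiv Cas1 L V = 2 * dot L V.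
Proof.
  unfold dderiv; apply is_derive_unique; unfold Cas1, dot, L6add, L6scale; simpl.
  auto_derive; [easy | ring].
Qed.

Lemma dderiv_Cas2 L V : dderiv Cas2 L V = dot (hodge L) V.
Proof.
  unfold dderiv; apply is_derive_unique; unfold Cas2, dot, hodge, L6add, L6scale; simpl.
  auto_derive; [easy | ring].
Qed.

Lemma dderiv_eta1 e1 e2 e3 e4 L V :
  dderiv (eta1 e1 e2 e3 e4) L V = 2 * dot (pmul (compl_vec Rplus e1 e2 e3 e4) L) V.
Proof.
  unfold dderiv; apply is_derive_unique; unfold eta1, dot, pmul, compl_vec, L6add, L6scale; simpl.
  auto_derive; [easy | ring].
Qed.

Lemma dderiv_eta2 e1 e2 e3 e4 L V :
  dderiv (eta2 e1 e2 e3 e4) L V = 2 * dot (pmul (compl_vec Rmult e1 e2 e3 e4) L) V.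
Proof.
  unfold dderiv; apply is_derive_unique; unfold eta2, dot, pmul, compl_vec, L6add, L6scale; simpl.
  auto_derive; [easy | ring].
Qed.

Lemma dderiv_eta a b e1 e2 e3 e4 L V :
  a * dderiv (eta1 e1 e2 e3 e4) L V + b * dderiv (eta2 e1 e2 e3 e4) L V
  = 2 * dot (pmul (compl_vec (lcoef a b 0) e1 e2 e3 e4) L) V.
Proof. rewrite dderiv_eta1, dderiv_eta2; destruct L, V; L6_ring. Qed.

Lemma tangent_Mh_iff L V : tangent_Mh L V <-> dot L V = 0 /\ dot (hodge L) V = 0.
Proof.
  unfold tangent_Mh; rewrite dderiv_Cas1, dderiv_Cas2; split; intros [H1 H2]; split; lra.
Qed.

Lemma dot_tangent_proj L V W : dot W (tangent_proj L V) = dot (tangent_proj L W) V.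
Proof. destruct L, V, W; L6_ring. Qed.

Lemma tangent_proj_tangent L V : in_Mh 1 L -> tangent_Mh L (tangent_proj L V).
Proof.
  intros [HC1 HC2]; apply tangent_Mh_iff; split.
  - transitivity (dot L V * (1 - Cas1 L) - dot (hodge L) V * (2 * Cas2 L));
      [destruct L, V; unfold Cas1, Cas2; L6_ring | rewrite HC1, HC2; ring].
  - transitivity (dot (hodge L) V * (1 - Cas1 L) - dot L V * (2 * Cas2 L));
      [destruct L, V; unfold Cas1, Cas2; L6_ring | rewrite HC1, HC2; ring].
Qed.

Lemma eq0_of_dot U : (forall V, dot U V = 0) -> U = mkL6 0 0 0 0 0 0.
Proof.
  intro H; destruct U as [u12 u13 u14 u23 u24 u34].
  pose proof (H (mkL6 1 0 0 0 0 0)); pose proof (H (mkL6 0 1 0 0 0 0));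
  pose proof (H (mkL6 0 0 1 0 0 0)); pose proof (H (mkL6 0 0 0 1 0 0));
  pose proof (H (mkL6 0 0 0 0 1 0)); pose proof (H (mkL6 0 0 0 0 0 1)).
  unfold dot in *; simpl in *; f_equal; lra.
Qed.

Lemma critical_point_iff e1 e2 e3 e4 L :
  critical_point e1 e2 e3 e4 1 L <->
  in_Mh 1 L /\ exists a b mu nu, (a <> 0 \/ b <> 0) /\
    pmul (compl_vec (lcoef a b mu) e1 e2 e3 e4) L = L6scale nu (hodge L).
Proof.
  split.
  - intros [HM [a [b [Hab Hcrit]]]]; split; [exact HM |].
    set (W := pmul (compl_vec (lcoef a b 0) e1 e2 e3 e4) L).
    assert (HW : tangent_proj L W = mkL6 0 0 0 0 0 0).
    { apply eq0_of_dot; intro V; rewrite <- dot_tangent_proj.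
      pose proof (Hcrit _ (tangent_proj_tangent L V HM)) as H.
      rewrite dderiv_eta in H; unfold W; lra. }
    exists a, b, (dot L W), (dot (hodge L) W); split; [exact Hab |].
    unfold tangent_proj in HW; set (mu := dot L W) in *; set (nu := dot (hodge L) W) in *.
    clearbody mu nu; subst W; destruct L.
    unfold pmul, compl_vec, lcoef, L6add, L6scale, hodge in *; simpl in *.
    injection HW; intros; f_equal; lra.
  - intros [HM [a [b [mu [nu [Hab Hg]]]]]]; split; [exact HM |].
    exists a, b; split; [exact Hab |].
    intros V HV; apply tangent_Mh_iff in HV as [HV1 HV2].
    rewrite dderiv_eta.
    transitivity (2 * (dot (pmul (compl_vec (lcoef a b mu) e1 e2 e3 e4) L) V + mu * dot L V));
      [destruct L, V; L6_ring |].
    rewrite Hg, HV1; transitivity (2 * nu * dot (hodge L) V);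
      [destruct L, V; L6_ring | rewrite HV2; ring].
Qed.

(* d(eta2 u) = 2 nu dCas2 at L.  For u = e - t this is the critical-point equation of
   [critical_point_iff] with (a, b, mu) = (-t, 1, -t^2). *)
Definition lagrange_eta2 (u1 u2 u3 u4 nu : R) (L : L6) : Prop :=
  pmul (compl_vec Rmult u1 u2 u3 u4) L = L6scale nu (hodge L).

Lemma hodge_pair_product g g' x x' nu :
  g * x = nu * x' -> g' * x' = nu * x -> g * g' = nu ^ 2 \/ (x = 0 /\ x' = 0).
Proof.
  intros H H'; destruct (Req_dec (g * g') (nu ^ 2)) as [E | N]; [left; exact E | right].
  assert (Hx : (g * g' - nu ^ 2) * x = 0)
    by (transitivity (g' * (g * x) - nu * (nu * x)); [ring | rewrite H, <- H'; ring]).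
  assert (Hx' : (g * g' - nu ^ 2) * x' = 0)
    by (transitivity (g * (g' * x') - nu * (nu * x')); [ring | rewrite H', <- H; ring]).
  apply Rmult_integral in Hx, Hx'; split; [destruct Hx | destruct Hx']; lra.
Qed.

Lemma eta1_shift e1 e2 e3 e4 t L :
  eta1 e1 e2 e3 e4 L = eta1 (e1 - t) (e2 - t) (e3 - t) (e4 - t) L + 2 * t * Cas1 L.
Proof. unfold eta1, Cas1; ring. Qed.

Lemma eta2_shift e1 e2 e3 e4 t L :
  eta2 e1 e2 e3 e4 L = eta2 (e1 - t) (e2 - t) (e3 - t) (e4 - t) L
    + t * eta1 (e1 - t) (e2 - t) (e3 - t) (e4 - t) L + t ^ 2 * Cas1 L.
Proof. unfold eta1, eta2, Cas1; ring. Qed.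

Lemma eta2_eq0_of_lagrange u1 u2 u3 u4 nu L :
  Cas2 L = 0 -> lagrange_eta2 u1 u2 u3 u4 nu L -> eta2 u1 u2 u3 u4 L = 0.
Proof.
  intros HC2 Hlag.
  transitivity (dot (pmul (compl_vec Rmult u1 u2 u3 u4) L) L); [destruct L; unfold eta2; L6_ring |].
  rewrite Hlag; transitivity (2 * nu * Cas2 L);
    [destruct L; unfold Cas2; L6_ring | rewrite HC2; ring].
Qed.

Lemma prod_eta1_eq0_of_lagrange u1 u2 u3 u4 nu L :
  Cas2 L = 0 -> lagrange_eta2 u1 u2 u3 u4 nu L -> u1 * u2 * u3 * u4 * eta1 u1 u2 u3 u4 L = 0.
Proof.
  intros HC2 Hlag.
  set (w := mkL6 (u1 * u2 * (u3 + u4)) (u1 * u3 * (u2 + u4)) (u1 * u4 * (u2 + u3))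
                 (u2 * u3 * (u1 + u4)) (u2 * u4 * (u1 + u3)) (u3 * u4 * (u1 + u2))).
  transitivity (dot (pmul w L) (pmul (compl_vec Rmult u1 u2 u3 u4) L));
    [destruct L; unfold w, eta1; L6_ring |].
  rewrite Hlag;
  transitivity (nu * (u1 * u2 * u3 + u1 * u2 * u4 + u1 * u3 * u4 + u2 * u3 * u4) * Cas2 L);
    [destruct L; unfold w, Cas2; L6_ring | rewrite HC2; ring].
Qed.

Lemma lagrange_prod_eq_sqr u1 u2 u3 u4 nu L :
  Cas1 L = 1 -> lagrange_eta2 u1 u2 u3 u4 nu L -> u1 * u2 * u3 * u4 = nu ^ 2.
Proof.
  intros HC1 Hlag; destruct L as [x12 x13 x14 x23 x24 x34].
  unfold lagrange_eta2, pmul, compl_vec, L6scale, hodge in Hlag; simpl in Hlag.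
  injection Hlag as G12 G13 G14 G23 G24 G34.
  rewrite <- Ropp_mult_distr_r, Ropp_mult_distr_l in G13, G24.
  destruct (hodge_pair_product _ _ _ _ _ G12 G34) as [M | [-> ->]]; [lra |].
  destruct (hodge_pair_product _ _ _ _ _ G13 G24) as [M | [-> ->]]; [lra |].
  destruct (hodge_pair_product _ _ _ _ _ G14 G23) as [M | [-> ->]]; [lra |].
  unfold Cas1 in HC1; simpl in HC1; lra.
Qed.

Lemma sorted_product_pos_cases u1 u2 u3 u4 :
  u1 < u2 -> u2 < u3 -> u3 < u4 -> 0 < u1 * u2 * u3 * u4 ->
  0 < u1 \/ u4 < 0 \/ (u2 < 0 /\ 0 < u3).
Proof.
  intros H12 H23 H34 HP.
  destruct (Rlt_le_dec 0 u1) as [H1 | H1]; [left; exact H1 | right].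
  destruct (Rlt_le_dec u4 0) as [H4 | H4]; [left; exact H4 | right].
  split.
  - destruct (Rlt_le_dec u2 0) as [H2 | H2]; [exact H2 | exfalso].
    assert (0 <= u2 * u3 * u4) by (repeat apply Rmult_le_pos; lra). nra.
  - destruct (Rlt_le_dec 0 u3) as [H3 | H3]; [exact H3 | exfalso].
    assert (0 <= - u1 * - u2 * - u3) by (repeat apply Rmult_le_pos; lra). nra.
Qed.

Lemma quadratic_form_nonneg c L :
  0 <= l12 c -> 0 <= l13 c -> 0 <= l14 c -> 0 <= l23 c -> 0 <= l24 c -> 0 <= l34 c ->
  0 <= dot (pmul c L) L.
Proof.
  destruct c, L; unfold dot, pmul; simpl; intros.
  repeat apply Rplus_le_le_0_compat; rewrite Rmult_assoc; apply Rmult_le_pos; nra.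
Qed.

Lemma eta1_bounds u1 u2 u3 u4 L :
  u1 <= u2 -> u2 <= u3 -> u3 <= u4 -> Cas1 L = 1 ->
  u1 + u2 <= eta1 u1 u2 u3 u4 L <= u3 + u4.
Proof.
  intros H12 H23 H34 HC1; split.
  - assert (H : 0 <= dot (pmul (compl_vec (fun x y => x + y - (u1 + u2)) u1 u2 u3 u4) L) L)
      by (apply quadratic_form_nonneg; simpl; lra).
    replace (dot _ L) with (eta1 u1 u2 u3 u4 L - (u1 + u2) * Cas1 L) in H
      by (destruct L; unfold eta1, Cas1; L6_ring).
    rewrite HC1 in H; lra.
  - assert (H : 0 <= dot (pmul (compl_vec (fun x y => u3 + u4 - (x + y)) u1 u2 u3 u4) L) L)
      by (apply quadratic_form_nonneg; simpl; lra).
    replace (dot _ L) with ((u3 + u4) * Cas1 L - eta1 u1 u2 u3 u4 L) in H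
      by (destruct L; unfold eta1, Cas1; L6_ring).
    rewrite HC1 in H; lra.
Qed.

Lemma critical_of_lagrange e1 e2 e3 e4 t nu L :
  in_Mh 1 L -> lagrange_eta2 (e1 - t) (e2 - t) (e3 - t) (e4 - t) nu L ->
  critical_point e1 e2 e3 e4 1 L.
Proof.
  intros HM Hlag; apply critical_point_iff; split; [exact HM |].
  exists (- t), 1, (- t ^ 2), nu; split; [right; lra |].
  rewrite <- Hlag; destruct L; unfold pmul, compl_vec, lcoef; simpl; f_equal; ring.
Qed.

Lemma on_line_of_lagrange e1 e2 e3 e4 t nu L :
  in_Mh 1 L -> lagrange_eta2 (e1 - t) (e2 - t) (e3 - t) (e4 - t) nu L ->
  on_line t (eta1 e1 e2 e3 e4 L, eta2 e1 e2 e3 e4 L).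
Proof.
  intros [HC1 HC2] Hlag; unfold on_line; simpl.
  rewrite (eta1_shift _ _ _ _ t), (eta2_shift _ _ _ _ t),
    (eta2_eq0_of_lagrange _ _ _ _ _ _ HC2 Hlag), HC1.
  ring.
Qed.

Lemma on_C_of_lagrange e1 e2 e3 e4 t nu L :
  e1 < e2 -> e2 < e3 -> e3 < e4 -> in_Mh 1 L ->
  t <> e1 -> t <> e2 -> t <> e3 -> t <> e4 ->
  lagrange_eta2 (e1 - t) (e2 - t) (e3 - t) (e4 - t) nu L ->
  on_C e2 e3 (eta1 e1 e2 e3 e4 L, eta2 e1 e2 e3 e4 L).
Proof.
  intros O1 O2 O3 [HC1 HC2] N1 N2 N3 N4 Hlag.
  assert (HP0 : (e1 - t) * (e2 - t) * (e3 - t) * (e4 - t) <> 0)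
    by (repeat apply Rmult_integral_contrapositive_currified; lra).
  assert (HP : 0 < (e1 - t) * (e2 - t) * (e3 - t) * (e4 - t)).
  { rewrite (lagrange_prod_eq_sqr _ _ _ _ _ _ HC1 Hlag) in HP0 |- *.
    destruct (pow2_ge_0 nu) as [H | H]; [exact H | exfalso; exact (HP0 (eq_sym H))]. }
  assert (H1 : eta1 (e1 - t) (e2 - t) (e3 - t) (e4 - t) L = 0).
  { pose proof (prod_eta1_eq0_of_lagrange _ _ _ _ _ _ HC2 Hlag) as H.
    apply Rmult_integral in H as [H | H]; [contradiction | exact H]. }
  (* with all u_i of one sign eta1 u could not vanish *)
  pose proof (eta1_bounds (e1 - t) (e2 - t) (e3 - t) (e4 - t) L
                ltac:(lra) ltac:(lra) ltac:(lra) HC1).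
  destruct (sorted_product_pos_cases (e1 - t) (e2 - t) (e3 - t) (e4 - t))
    as [Hpos | [Hneg | [H2 H3]]]; try lra.
  exists t; split; [lra |].
  rewrite (eta1_shift _ _ _ _ t), (eta2_shift _ _ _ _ t), H1,
    (eta2_eq0_of_lagrange _ _ _ _ _ _ HC2 Hlag), HC1.
  f_equal; ring.
Qed.

Lemma lagrange_of_tangent_multiplier e1 e2 e3 e4 b t nu L :
  b <> 0 ->
  pmul (compl_vec (lcoef (- b * t) b (- b * t ^ 2)) e1 e2 e3 e4) L = L6scale nu (hodge L) ->
  lagrange_eta2 (e1 - t) (e2 - t) (e3 - t) (e4 - t) (nu / b) L.
Proof.
  intros Hb Hg; destruct L.
  unfold lagrange_eta2, pmul, compl_vec, lcoef, L6scale, hodge in *; simpl in *.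
  injection Hg as G12 G13 G14 G23 G24 G34; f_equal; apply (Rmult_eq_reg_l b); auto;
    match goal with G : _ * ?x = nu * ?y |- b * (_ * ?x) = _ =>
      transitivity (nu * y); [rewrite <- G; ring | field; exact Hb] end.
Qed.

(* a^2 + b mu = 0 says that the line aX + bY = mu is tangent to the parabola X^2 = 4Y,
   at the point (2t, t^2). *)
Lemma tangent_multiplier_param a b mu :
  (a <> 0 \/ b <> 0) -> a ^ 2 + b * mu = 0 ->
  b <> 0 /\ exists t, a = - b * t /\ mu = - b * t ^ 2.
Proof.
  intros Hab Hc.
  assert (Hb : b <> 0).
  { intro Hb0; subst b; destruct Hab as [Ha | Hb0]; [apply Ha; nra | exact (Hb0 eq_refl)]. }
  split; [exact Hb |]; exists (- a / b); split; [field; exact Hb |].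
  apply (Rmult_eq_reg_l b); [| exact Hb].
  transitivity (- a ^ 2); [lra | field; exact Hb].
Qed.

Lemma tangent_of_equal_products a b mu u1 u2 u3 u4 :
  u1 <> u4 -> u2 <> u3 ->
  lcoef a b mu u3 u4 * lcoef a b mu u1 u2 = lcoef a b mu u2 u4 * lcoef a b mu u1 u3 ->
  a ^ 2 + b * mu = 0.
Proof.
  intros H14 H23 H.
  assert (E : (a ^ 2 + b * mu) * ((u1 - u4) * (u2 - u3)) = 0)
    by (transitivity (lcoef a b mu u2 u4 * lcoef a b mu u1 u3
                      - lcoef a b mu u3 u4 * lcoef a b mu u1 u2); [unfold lcoef; ring | lra]).
  apply Rmult_integral in E as [E | E]; [exact E |].
  exfalso; apply Rmult_integral in E as [E | E]; lra.
Qed.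

Ltac lagrange_ring := unfold lagrange_eta2, pmul, compl_vec, L6scale, hodge; simpl; f_equal; ring.

Ltac on_avoided_line HM :=
  right; first
    [ left; apply (on_line_of_lagrange _ _ _ _ _ 0 _ HM); lagrange_ring
    | right; left; apply (on_line_of_lagrange _ _ _ _ _ 0 _ HM); lagrange_ring
    | right; right; left; apply (on_line_of_lagrange _ _ _ _ _ 0 _ HM); lagrange_ring
    | right; right; right; apply (on_line_of_lagrange _ _ _ _ _ 0 _ HM); lagrange_ring ].

Lemma tangent_multiplier_or_on_line e1 e2 e3 e4 a b mu nu L :
  e1 < e2 -> e2 < e3 -> e3 < e4 -> in_Mh 1 L ->
  pmul (compl_vec (lcoef a b mu) e1 e2 e3 e4) L = L6scale nu (hodge L) ->
  let p := (eta1 e1 e2 e3 e4 L, eta2 e1 e2 e3 e4 L) in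
  a ^ 2 + b * mu = 0 \/ on_line e1 p \/ on_line e2 p \/ on_line e3 p \/ on_line e4 p.
Proof.
  intros O1 O2 O3 HM Hg p; subst p.
  assert (HC2 := proj2 HM).
  destruct L as [x12 x13 x14 x23 x24 x34]; unfold Cas2 in HC2; simpl in HC2.
  unfold pmul, compl_vec, L6scale, hodge in Hg; simpl in Hg.
  injection Hg as G12 G13 G14 G23 G24 G34.
  rewrite <- Ropp_mult_distr_r, Ropp_mult_distr_l in G13, G24.
  (* two nonzero Hodge pairs force tangency; a single one keeps one nonzero coordinate *)
  destruct (hodge_pair_product _ _ _ _ _ G12 G34) as [M1 | [-> ->]],
           (hodge_pair_product _ _ _ _ _ G13 G24) as [M2 | [-> ->]],
           (hodge_pair_product _ _ _ _ _ G14 G23) as [M3 | [-> ->]].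
  - left; apply (tangent_of_equal_products a b mu e1 e2 e3 e4);
      [lra | lra | unfold lcoef in *; lra].
  - left; apply (tangent_of_equal_products a b mu e1 e2 e3 e4);
      [lra | lra | unfold lcoef in *; lra].
  - left; apply (tangent_of_equal_products a b mu e1 e4 e2 e3);
      [lra | lra | unfold lcoef in *; lra].
  - assert (Z : x12 * x34 = 0) by lra.
    destruct (Rmult_integral _ _ Z) as [-> | ->]; on_avoided_line HM.
  - left; apply (tangent_of_equal_products a b mu e1 e3 e4 e2);
      [lra | lra | unfold lcoef in *; lra].
  - assert (Z : x13 * x24 = 0) by lra.
    destruct (Rmult_integral _ _ Z) as [-> | ->]; on_avoided_line HM.
  - assert (Z : x14 * x23 = 0) by lra.
    destruct (Rmult_integral _ _ Z) as [-> | ->]; on_avoided_line HM.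
  - on_avoided_line HM.
Qed.

Lemma critical_value_on_lines_or_arc e1 e2 e3 e4 p :
  e1 < e2 -> e2 < e3 -> e3 < e4 -> critical_value e1 e2 e3 e4 1 p ->
  on_line e1 p \/ on_line e2 p \/ on_line e3 p \/ on_line e4 p \/ on_C e2 e3 p.
Proof.
  intros O1 O2 O3 [L [Hcrit ->]].
  apply critical_point_iff in Hcrit as [HM [a [b [mu [nu [Hab Hg]]]]]].
  destruct (tangent_multiplier_or_on_line _ _ _ _ _ _ _ _ _ O1 O2 O3 HM Hg) as [Hc | Hl]; [| tauto].
  destruct (tangent_multiplier_param _ _ _ Hab Hc) as [Hb [t [-> ->]]].
  pose proof (lagrange_of_tangent_multiplier _ _ _ _ _ _ _ _ Hb Hg) as Hlag.
  pose proof (on_line_of_lagrange _ _ _ _ _ _ _ HM Hlag) as Ht.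
  destruct (Req_dec t e1) as [-> | N1]; [tauto |].
  destruct (Req_dec t e2) as [-> | N2]; [tauto |].
  destruct (Req_dec t e3) as [-> | N3]; [tauto |].
  destruct (Req_dec t e4) as [-> | N4]; [tauto |].
  do 4 right; exact (on_C_of_lagrange _ _ _ _ _ _ _ O1 O2 O3 HM N1 N2 N3 N4 Hlag).
Qed.

Lemma arc_point_critical e1 e2 e3 e4 t r1 r2 r3 r4 c :
  e1 = t - r1 ^ 2 -> e2 = t - r2 ^ 2 -> e3 = t + r3 ^ 2 -> e4 = t + r4 ^ 2 ->
  c ^ 2 * ((r1 ^ 2 + r4 ^ 2) * (r2 ^ 2 + r3 ^ 2)) = 1 ->
  critical_value e1 e2 e3 e4 1 (2 * t, t ^ 2).
Proof.
  intros -> -> -> -> Hc.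
  set (L := mkL6 (c * r1 * r2) (c * r1 * r3) 0 0 (c * r2 * r4) (c * r3 * r4)).
  assert (HC1 : Cas1 L = 1) by (rewrite <- Hc; unfold L, Cas1; simpl; ring).
  assert (HM : in_Mh 1 L) by (split; [exact HC1 | unfold L, Cas2; simpl; ring]).
  exists L; split.
  - apply (critical_of_lagrange _ _ _ _ t (r1 * r2 * r3 * r4) _ HM); unfold L; lagrange_ring.
  - rewrite (eta1_shift _ _ _ _ t), (eta2_shift _ _ _ _ t), HC1.
    unfold L, eta1, eta2; simpl; f_equal; ring.
Qed.

Lemma arc_critical_value e1 e2 e3 e4 p :
  e1 < e2 -> e2 < e3 -> e3 < e4 -> on_C e2 e3 p -> critical_value e1 e2 e3 e4 1 p.
Proof.
  intros O1 O2 O3 [t [[Ht2 Ht3] ->]].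
  assert (HK : 0 < (e4 - e1) * (e3 - e2)) by (apply Rmult_lt_0_compat; lra).
  apply (arc_point_critical _ _ _ _ t (sqrt (t - e1)) (sqrt (t - e2)) (sqrt (e3 - t))
           (sqrt (e4 - t)) (/ sqrt ((e4 - e1) * (e3 - e2))));
    rewrite ?pow_inv, !pow2_sqrt by lra; [ring | ring | ring | ring | field; lra].
Qed.

Lemma line_segment_critical e1 e2 e3 e4 t A B (F : R -> R -> L6) :
  A < B ->
  (forall x y, x ^ 2 + y ^ 2 = 1 ->
     in_Mh 1 (F x y) /\ lagrange_eta2 (e1 - t) (e2 - t) (e3 - t) (e4 - t) 0 (F x y)) ->
  (forall x y, eta1 e1 e2 e3 e4 (F x y) = x ^ 2 * A + y ^ 2 * B) ->
  forall s, A <= s <= B -> critical_value e1 e2 e3 e4 1 (s, t * (s - t)).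
Proof.
  intros HAB HF Heta s Hs.
  set (th := (s - A) / (B - A)).
  assert (Hth : 0 <= th <= 1).
  { unfold th; split.
    - apply Rmult_le_pos; [lra | left; apply Rinv_0_lt_compat; lra].
    - apply (Rmult_le_reg_r (B - A)); [lra |].
      unfold Rdiv; rewrite Rmult_assoc, Rinv_l; lra. }
  destruct (HF (sqrt (1 - th)) (sqrt th)) as [HM Hlag]; [rewrite !pow2_sqrt by lra; ring |].
  pose proof (on_line_of_lagrange _ _ _ _ _ _ _ HM Hlag) as Hl; unfold on_line in Hl; simpl in Hl.
  assert (Hs' : eta1 e1 e2 e3 e4 (F (sqrt (1 - th)) (sqrt th)) = s)
    by (rewrite Heta, !pow2_sqrt by lra; unfold th; field; lra).
  exists (F (sqrt (1 - th)) (sqrt th)); split;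
    [exact (critical_of_lagrange _ _ _ _ _ _ _ HM Hlag) |].
  rewrite Hs' in *; f_equal; lra.
Qed.

Definition e_idx (e1 e2 e3 e4 : R) (i : nat) : R :=
  match i with 1%nat => e1 | 2%nat => e2 | 3%nat => e3 | _ => e4 end.

Ltac segment_obligations :=
  first
    [ lra
    | intros x y Hxy; split; [split; unfold Cas1, Cas2; simpl; [lra | ring] | lagrange_ring]
    | intros x y; unfold eta1; simpl; ring ].

Lemma line_segments e1 e2 e3 e4 :
  e1 < e2 -> e2 < e3 -> e3 < e4 ->
  forall i : nat, (1 <= i <= 4)%nat ->
  exists a b, a < b /\ forall t, a <= t <= b ->
    critical_value e1 e2 e3 e4 1 (t, e_idx e1 e2 e3 e4 i * (t - e_idx e1 e2 e3 e4 i)).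
Proof.
  intros O1 O2 O3 i Hi.
  destruct i as [|[|[|[|[|i]]]]]; try lia; simpl.
  - exists (e1 + e3), (e1 + e4); split; [lra |].
    apply (line_segment_critical _ _ _ _ _ _ _ (fun x y => mkL6 0 0 0 y x 0)); segment_obligations.
  - exists (e2 + e3), (e2 + e4); split; [lra |].
    apply (line_segment_critical _ _ _ _ _ _ _ (fun x y => mkL6 0 y x 0 0 0)); segment_obligations.
  - exists (e2 + e3), (e3 + e4); split; [lra |].
    apply (line_segment_critical _ _ _ _ _ _ _ (fun x y => mkL6 y 0 x 0 0 0)); segment_obligations.
  - exists (e2 + e4), (e3 + e4); split; [lra |].
    apply (line_segment_critical _ _ _ _ _ _ _ (fun x y => mkL6 y x 0 0 0 0)); segment_obligations.
Qed.

Lemma e_idx_neq e1 e2 e3 e4 i j :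
  e1 < e2 -> e2 < e3 -> e3 < e4 ->
  (1 <= i <= 4)%nat -> (1 <= j <= 4)%nat -> i <> j ->
  e_idx e1 e2 e3 e4 i <> e_idx e1 e2 e3 e4 j.
Proof.
  intros O1 O2 O3 Hi Hj Hij.
  destruct i as [|[|[|[|[|i]]]]]; try lia; destruct j as [|[|[|[|[|j]]]]]; try lia;
    simpl; intro; lra.
Qed.

Ltac unit_vector_witness W t :=
  exists W; split;
  [ apply (critical_of_lagrange _ _ _ _ t 0);
    [split; unfold Cas1, Cas2; simpl; ring | lagrange_ring]
  | unfold eta1, eta2; simpl; f_equal; ring ].

Lemma pair_point_critical_value e1 e2 e3 e4 i j :
  (1 <= i <= 4)%nat -> (1 <= j <= 4)%nat -> i <> j ->
  critical_value e1 e2 e3 e4 1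
    (e_idx e1 e2 e3 e4 i + e_idx e1 e2 e3 e4 j, e_idx e1 e2 e3 e4 i * e_idx e1 e2 e3 e4 j).
Proof.
  enough (H : forall k l, (1 <= k < l)%nat -> (l <= 4)%nat ->
    critical_value e1 e2 e3 e4 1
      (e_idx e1 e2 e3 e4 k + e_idx e1 e2 e3 e4 l, e_idx e1 e2 e3 e4 k * e_idx e1 e2 e3 e4 l)).
  { intros Hi Hj Hij; destruct (proj1 (Nat.lt_gt_cases i j) Hij) as [Hlt | Hgt].
    - apply H; lia.
    - rewrite Rplus_comm, Rmult_comm; apply H; lia. }
  (* d_kl is the value at the unit vector of the coordinate complementary to {k, l} *)
  intros k l Hkl Hl; destruct k as [|[|[|[|k]]]]; try lia; destruct l as [|[|[|[|[|l]]]]]; try lia;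
    simpl.
  - unit_vector_witness (mkL6 0 0 0 0 0 1) e1.
  - unit_vector_witness (mkL6 0 0 0 0 1 0) e1.
  - unit_vector_witness (mkL6 0 0 0 1 0 0) e1.
  - unit_vector_witness (mkL6 0 0 1 0 0 0) e2.
  - unit_vector_witness (mkL6 0 1 0 0 0 0) e2.
  - unit_vector_witness (mkL6 1 0 0 0 0 0) e3.
Qed.

Lemma on_two_lines_iff u v p : u <> v -> (on_line u p /\ on_line v p <-> p = (u + v, u * v)).
Proof.
  intro Huv; destruct p as [X Y]; unfold on_line; simpl; split.
  - intros [H1 H2].
    assert (HX : X = u + v) by (apply (Rmult_eq_reg_l (v - u)); [lra | intro; apply Huv; lra]).
    subst X; f_equal; lra.
  - intro H; injection H as -> ->; split; ring.
Qed.

Lemma on_line_parabola_iff u p : on_line u p /\ on_parabola p <-> p = (2 * u, u ^ 2).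
Proof.
  destruct p as [X Y]; unfold on_line, on_parabola; simpl; split.
  - intros [H1 H2].
    assert (HX : X = 2 * u) by nra.
    subst X; f_equal; lra.
  - intro H; injection H as -> ->; split; field.
Qed.

Lemma Derive_quarter_square u : Derive (fun x => x ^ 2 / 4) (2 * u) = u.
Proof. apply is_derive_unique; auto_derive; [easy | field]. Qed.

Theorem proposition3 (e1 e2 e3 e4 : R) :
  e1 < e2 < e3 /\ e3 < e4 ->
  let e := fun i : nat => match i with 1%nat => e1 | 2%nat => e2 | 3%nat => e3 | _ => e4 end in
  let CV := critical_value e1 e2 e3 e4 1 in
  (* the critical values lie on the four lines and the parabola arc C *)
  (forall p, CV p ->
     on_line e1 p \/ on_line e2 p \/ on_line e3 p \/ on_line e4 p \/ on_C e2 e3 p) /\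
  (* each line L_i contributes a (nondegenerate) part of the critical values *)
  (forall i : nat, (1 <= i <= 4)%nat ->
     exists a b, a < b /\ forall t, a <= t <= b -> CV (t, e i * (t - e i))) /\
  (* the whole arc C consists of critical values *)
  (forall p, on_C e2 e3 p -> CV p) /\
  (* six transverse intersections L_i /\ L_j at d_ij = (e_i+e_j, e_i e_j) *)
  (forall i j : nat, (1 <= i <= 4)%nat -> (1 <= j <= 4)%nat -> i <> j ->
     e i <> e j /\
     (forall p, on_line (e i) p /\ on_line (e j) p <-> p = (e i + e j, e i * e j)) /\
     CV (e i + e j, e i * e j)) /\
  (* d_i = (2e_i, e_i^2), i in {2,3}: tangential intersections of L_i with C *)
  (forall i : nat, (i = 2 \/ i = 3)%nat ->
     on_C e2 e3 (2 * e i, e i ^ 2) /\ CV (2 * e i, e i ^ 2) /\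
     (forall p, on_line (e i) p /\ on_parabola p <-> p = (2 * e i, e i ^ 2)) /\
     (* tangency: slope of L_i equals the slope of the parabola at d_i *)
     Derive (fun x => x ^ 2 / 4) (2 * e i) = e i).
Proof.
  intros [[O1 O2] O3] e CV.
  split; [| split; [| split; [| split]]].
  - exact (fun p => critical_value_on_lines_or_arc e1 e2 e3 e4 p O1 O2 O3).
  - exact (line_segments e1 e2 e3 e4 O1 O2 O3).
  - exact (fun p => arc_critical_value e1 e2 e3 e4 p O1 O2 O3).
  - intros i j Hi Hj Hij.
    pose proof (e_idx_neq e1 e2 e3 e4 i j O1 O2 O3 Hi Hj Hij) as Hne.
    split; [exact Hne |]; split; [intro p; exact (on_two_lines_iff _ _ p Hne) |].
    exact (pair_point_critical_value e1 e2 e3 e4 i j Hi Hj Hij).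
  - intros i Hi.
    assert (HC : on_C e2 e3 (2 * e i, e i ^ 2))
      by (destruct Hi as [-> | ->]; [exists e2 | exists e3]; split; (lra || reflexivity)).
    split; [exact HC |]; split; [exact (arc_critical_value e1 e2 e3 e4 _ O1 O2 O3 HC) |].
    split; [intro p; apply on_line_parabola_iff | apply Derive_quarter_square].
Qed.
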